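(* Let $n\ge2$, $s\ge1$, and let $f:\mathbb{R}_{\ge0}\to\mathbb{R}_{\ge0}$ be super-additive with $c_f[s]<\infty$. Let $x(1),\ldots,x(s)\in\mathbb{R}^n_{\ge0}$, $x=\sum_{j=1}^s x(j)$, and let $e_1,\ldots,e_n>0$ be fixed reals. Let $i^*=\arg\max_{i}e_i^{-1}f(x_i)$ and suppose that for some constant $C>0$, $$\sum_{i=1}^n e_i^{-1}f(x_i)\le (C\ln^2 n)\cdot e_{i^*}^{-1}f(x_{i^*})\quad\text{and}\quad f(x_{i^*})>0.$$ For each server $j$ with $\sum_i e_i^{-1}f(x_i(j))>0$, let $\mathrm{SC}_j$ be the set of values of $N$ independent draws of a random index $\mathbf{i}\in[n]$ with $\Pr[\mathbf{i}=i]=e_i^{-1}f(x_i(j))/\sum_{i'}e_{i'}^{-1}f(x_{i'}(j))$ (draws independent across servers); for other servers let $\mathrm{SC}_j=\emptyset$. If $N\ge 32C\ln^3 n\cdot c_f[s]/s$, then $i^*\in\bigcup_j \mathrm{SC}_j$ with probability at least $1-1/n^4$.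
   Context: $f$ is super-additive if $f(x+y)\ge f(x)+f(y)$ for all $x,y\ge0$. For an integer $s\ge1$, $c_f[s]$ denotes the smallest real number such that $f(y_1+\cdots+y_s)\le\frac{c_f[s]}{s}\big(\sqrt{f(y_1)}+\cdots+\sqrt{f(y_s)}\big)^2$ for all $y_1,\ldots,y_s\ge0$. $\ln$ is the natural logarithm. *)

From HB Require Import structures.
From mathcomp Require Import all_boot all_order all_algebra.
From mathcomp Require Import reals exp.
Set Implicit Arguments. Unset Strict Implicit. Unset Printing Implicit Defensive.
Import Order.TTheory GRing.Theory Num.Theory.
Local Open Scope ring_scope.

Section Defs.
Variable R : realType.

Definition superadditive (f : R -> R) :=
  forall x y, 0 <= x -> 0 <= y -> f x + f y <= f (x + y).

Definition cf_ineq (f : R -> R) (s : nat) (c : R) :=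
  forall y : 'I_s -> R, (forall j, 0 <= y j) ->
    f (\sum_(j < s) y j) <= c / s%:R * (\sum_(j < s) Num.sqrt (f (y j))) ^+ 2.

(* c = c_f[s] (the smallest such real; existence of it encodes c_f[s] < oo) *)
Definition is_cf (f : R -> R) (s : nat) (c : R) :=
  cf_ineq f s c /\ forall c', cf_ineq f s c' -> c <= c'.

Definition server_mass n s (f : R -> R) (e : 'I_n -> R) (x : 'I_s -> 'I_n -> R)
  (j : 'I_s) : R := \sum_(i < n) (e i)^-1 * f (x j i).

(* sampling distribution on [n] for server j; for servers with zero mass
   the draws are irrelevant (SC_j is empty), we use the uniform law *)
Definition draw_prob n s (f : R -> R) (e : 'I_n -> R) (x : 'I_s -> 'I_n -> R)
  (j : 'I_s) (i : 'I_n) : R :=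
  if 0 < server_mass f e x j then (e i)^-1 * f (x j i) / server_mass f e x j
  else n%:R^-1.

Definition outcome_weight n s N (f : R -> R) (e : 'I_n -> R)
  (x : 'I_s -> 'I_n -> R) (w : {ffun 'I_s * 'I_N -> 'I_n}) : R :=
  \prod_(p : 'I_s * 'I_N) draw_prob f e x p.1 (w p).

Definition SC n s N (f : R -> R) (e : 'I_n -> R) (x : 'I_s -> 'I_n -> R)
  (w : {ffun 'I_s * 'I_N -> 'I_n}) (j : 'I_s) : {set 'I_n} :=
  if 0 < server_mass f e x j then [set w (j, k) | k : 'I_N] else set0.

Definition prob_hit n s N (f : R -> R) (e : 'I_n -> R) (x : 'I_s -> 'I_n -> R)
  (i : 'I_n) : R :=
  \sum_(w : {ffun 'I_s * 'I_N -> 'I_n} | i \in \bigcup_(j < s) SC f e x w j)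
     outcome_weight f e x w.

End Defs.

From HB Require Import structures.
From mathcomp Require Import all_boot all_order all_algebra.
From mathcomp Require Import reals exp sequences.
From mathcomp Require Import lra ring.
Set Implicit Arguments. Unset Strict Implicit. Unset Printing Implicit Defensive.
Import Order.TTheory GRing.Theory Num.Theory.
Local Open Scope ring_scope.

(* Let t_j be the probability that one draw of server j returns i*, and M_j the
   total weight of server j, so that t_j M_j = e_{i*}^-1 f(x_{i*}(j)).  By the
   defining inequality of c_f[s] and Cauchy-Schwarz,
     e_{i*}^-1 f(x_{i*}) <= c_f[s]/s (sum_j sqrt(t_j M_j))^2
                        <= c_f[s]/s (sum_j t_j) (sum_j M_j),
   while super-additivity gives sum_j M_j <= sum_i e_i^-1 f(x_i)
   <= C ln^2 n e_{i*}^-1 f(x_{i*}).  Hence sum_j t_j >= s / (c_f[s] C ln^2 n),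
   and all N draws of all servers miss i* with probability
   prod_j (1 - t_j)^N <= exp(-N sum_j t_j) <= exp(-32 ln n) <= n^-4. *)

Lemma cauchy_schwarz_sum (R : realDomainType) m (u v : 'I_m -> R) :
  (\sum_j u j * v j) ^+ 2 <= (\sum_j u j ^+ 2) * (\sum_j v j ^+ 2).
Proof.
set U := \sum_j u j ^+ 2; set V := \sum_j v j ^+ 2; set W := \sum_j u j * v j.
have U_ge0 : 0 <= U by apply: sumr_ge0 => j _; apply: sqr_ge0.
have [U0 | U_neq0] := eqVneq U 0.
  have u0 j : u j = 0.
    by apply/eqP; rewrite -sqrf_eq0; apply/eqP/(psumr_eq0P _ U0) => // i _; apply: sqr_ge0.
  by rewrite /W big1 ?expr0n ?U0 ?mul0r // => j _; rewrite u0 mul0r.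
have : 0 <= U * (U * V - W ^+ 2).
  have -> : U * (U * V - W ^+ 2) = \sum_j (U * v j - W * u j) ^+ 2.
    rewrite (eq_bigr (fun j => U ^+ 2 * v j ^+ 2 - (2 * U * W) * (u j * v j)
                              + W ^+ 2 * u j ^+ 2)); last by move=> j _; ring.
    by rewrite !big_split /= sumrN -!mulr_sumr -/U -/V -/W; ring.
  by apply: sumr_ge0 => j _; apply: sqr_ge0.
by rewrite pmulr_rge0 ?lt_def ?U_neq0 // subr_ge0.
Qed.

Lemma sqr_sum_sqrt_mul_le (R : rcfType) m (t M : 'I_m -> R) :
  (forall j, 0 <= t j) -> (forall j, 0 <= M j) ->
  (\sum_j Num.sqrt (t j * M j)) ^+ 2 <= (\sum_j t j) * (\sum_j M j).
Proof.
move=> t_ge0 M_ge0.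
have sqrt_mul j : Num.sqrt (t j * M j) = Num.sqrt (t j) * Num.sqrt (M j).
  exact: sqrtrM.
rewrite (eq_bigr _ (fun j _ => sqrt_mul j)).
rewrite -(eq_bigr _ (fun j _ => sqr_sqrtr (t_ge0 j))).
rewrite -(eq_bigr _ (fun j _ => sqr_sqrtr (M_ge0 j))).
exact: cauchy_schwarz_sum.
Qed.

Lemma superadditive_sum (R : realType) (f : R -> R) m (y : 'I_m -> R) :
  (forall z, 0 <= z -> 0 <= f z) -> superadditive f ->
  (forall j, 0 <= y j) -> \sum_j f (y j) <= f (\sum_j y j).
Proof.
move=> f_ge0 f_sup; elim: m y => [|m IHm] y y_ge0; first by rewrite !big_ord0 f_ge0.
rewrite !big_ord_recr /=; apply: le_trans (f_sup _ _ _ _); last 2 first.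
- exact: sumr_ge0.
- exact: y_ge0.
by rewrite lerD2r IHm.
Qed.

Lemma cf_ineq_gt0 (R : realType) (f : R -> R) s c (y : 'I_s -> R) :
  cf_ineq f s c -> (forall j, 0 <= y j) -> 0 < f (\sum_j y j) -> 0 < c / s%:R.
Proof.
move=> cf_ok y_ge0 fy_gt0; rewrite ltNge; apply/negP => c_le0.
have := le_trans (cf_ok y y_ge0) (mulr_le0_ge0 c_le0 (sqr_ge0 _)).
by rewrite leNgt fy_gt0.
Qed.

Lemma prod_1subr_le_expR (R : realType) (I : Type) (r : seq I) (P : pred I) (t : I -> R) :
  (forall i, P i -> 0 <= t i <= 1) ->
  \prod_(i <- r | P i) (1 - t i) <= expR (- \sum_(i <- r | P i) t i).
Proof.
move=> t01; rewrite -sumrN expR_sum; apply: ler_prod => i /t01 /andP[t0 t1].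
by rewrite subr_ge0 t1 expR_ge1Dx.
Qed.

Section Sampling.
Variables (R : realType) (n s N : nat) (f : R -> R).
Variables (e : 'I_n -> R) (x : 'I_s -> 'I_n -> R) (istar : 'I_n).
Hypothesis f_ge0 : forall y, 0 <= y -> 0 <= f y.
Hypothesis x_ge0 : forall j i, 0 <= x j i.
Hypothesis e_gt0 : forall i, 0 < e i.
Hypothesis n_gt0 : (0 < n)%N.

Local Notation mass := (server_mass f e x).
Local Notation draw := (draw_prob f e x).

Lemma server_term_ge0 j i : 0 <= (e i)^-1 * f (x j i).
Proof. by rewrite mulr_ge0 ?f_ge0 // invr_ge0 ltW. Qed.

Lemma server_term_le_mass j i : (e i)^-1 * f (x j i) <= mass j.
Proof.
rewrite /server_mass (bigD1 i) //= lerDl.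
by apply: sumr_ge0 => i' _; apply: server_term_ge0.
Qed.

Lemma server_mass_ge0 j : 0 <= mass j.
Proof. exact: le_trans (server_term_ge0 j istar) (server_term_le_mass j istar). Qed.

Lemma sum_draw_prob j : \sum_i draw j i = 1.
Proof.
rewrite /draw_prob; case: (boolP (0 < mass j)) => [mass_gt0 | _].
  by rewrite -mulr_suml divff // gt_eqF.
by rewrite sumr_const card_ord -(mulr_natr n%:R^-1) mulVf // pnatr_eq0 -lt0n.
Qed.

(* When [mass j = 0] the division returns 0, consistently with [SC j] being empty. *)
Definition hit_prob j := (e istar)^-1 * f (x j istar) / mass j.

Lemma hit_prob_mulr_mass j : hit_prob j * mass j = (e istar)^-1 * f (x j istar).
Proof.
have [mass0 | mass_neq0] := eqVneq (mass j) 0; last by rewrite divfK.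
rewrite mass0 mulr0; apply/esym/eqP; rewrite eq_le server_term_ge0 andbT.
by rewrite -mass0 server_term_le_mass.
Qed.

Definition misses j : pred 'I_n := [pred i | (i != istar) || ~~ (0 < mass j)].

Lemma sum_draw_prob_misses j : \sum_(i in misses j) draw j i = 1 - hit_prob j.
Proof.
case: (boolP (0 < mass j)) => [mass_gt0 | mass_le0].
  have -> : hit_prob j = draw j istar by rewrite /draw_prob mass_gt0.
  rewrite -(sum_draw_prob j) [X in _ = X - _](bigD1 istar) //= addrC addrK.
  by apply: eq_bigl => i; rewrite inE mass_gt0 orbF.
have mass0 : mass j = 0 by apply/eqP; rewrite eq_le server_mass_ge0 leNgt mass_le0.
rewrite /hit_prob mass0 invr0 mulr0 subr0 -(sum_draw_prob j).
by apply: eq_bigl => i; rewrite inE mass_le0 orbT.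
Qed.

Lemma hit_prob_ge0 j : 0 <= hit_prob j.
Proof. by rewrite divr_ge0 ?server_term_ge0 ?server_mass_ge0. Qed.

Lemma hit_prob_le1 j : hit_prob j <= 1.
Proof.
rewrite -subr_ge0 -sum_draw_prob_misses; apply: sumr_ge0 => i _.
rewrite /draw_prob; case: ifP => _; last by rewrite invr_ge0.
by rewrite divr_ge0 ?server_term_ge0 ?server_mass_ge0.
Qed.

Lemma miss_family (w : {ffun 'I_s * 'I_N -> 'I_n}) :
  (istar \notin \bigcup_(j < s) SC f e x w j) = (w \in family (fun p => misses p.1)).
Proof.
apply/idP/familyP => [nohit [j k] | miss].
  rewrite inE /=; case: eqP => //= wjk; apply/negP => mass_gt0.
  apply: (negP nohit); apply/bigcupP; exists j => //.
  by rewrite /SC mass_gt0; apply/imsetP; exists k.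
apply/bigcupP => -[j _]; rewrite /SC; case: ifP => [mass_gt0 | _]; last by rewrite in_set0.
by case/imsetP => k _ istarE; have := miss (j, k); rewrite inE /= -istarE eqxx mass_gt0.
Qed.

Lemma prob_hit_eq :
  prob_hit N f e x istar = 1 - \prod_(p : 'I_s * 'I_N) (1 - hit_prob p.1).
Proof.
have total : \sum_(w : {ffun 'I_s * 'I_N -> 'I_n}) outcome_weight f e x w = 1.
  rewrite /outcome_weight -(bigA_distr_bigA (fun p i => draw p.1 i)) /=.
  by apply: big1 => p _; apply: sum_draw_prob.
(* Missing [istar] is a product event, so its probability factors over the draws. *)
have miss : \sum_(w in family (fun p : 'I_s * 'I_N => misses p.1)) outcome_weight f e x w
            = \prod_(p : 'I_s * 'I_N) (1 - hit_prob p.1).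
  by rewrite -(eq_bigr _ (fun (p : 'I_s * 'I_N) _ => sum_draw_prob_misses p.1)) bigA_distr_big_dep.
rewrite /prob_hit -miss -total.
rewrite [X in _ = X - _](bigID [pred w | istar \in \bigcup_(j < s) SC f e x w j]) /=.
by rewrite (eq_bigl _ _ miss_family) addrK.
Qed.

Lemma sum_server_mass_le : superadditive f ->
  \sum_j mass j <= \sum_i (e i)^-1 * f (\sum_j x j i).
Proof.
move=> f_sup; rewrite /server_mass exchange_big /=; apply: ler_sum => i _.
rewrite -mulr_sumr ler_wpM2l ?invr_ge0 ?(ltW (e_gt0 i)) //.
exact: superadditive_sum f_ge0 f_sup (fun j => x_ge0 j i).
Qed.

Lemma load_le_hits_mass (cfs : R) : cf_ineq f s cfs -> 0 <= cfs / s%:R ->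
  (e istar)^-1 * f (\sum_j x j istar) <= cfs / s%:R * (\sum_j hit_prob j) * (\sum_j mass j).
Proof.
move=> cf_ok cfs_ge0; have ei_ge0 : 0 <= (e istar)^-1 by rewrite invr_ge0 ltW.
have sqrt_load j : Num.sqrt (hit_prob j * mass j)
                   = Num.sqrt (e istar)^-1 * Num.sqrt (f (x j istar)).
  by rewrite hit_prob_mulr_mass sqrtrM.
have := sqr_sum_sqrt_mul_le hit_prob_ge0 server_mass_ge0.
rewrite (eq_bigr _ (fun j _ => sqrt_load j)) -mulr_sumr exprMn sqr_sqrtr // => cs.
apply: le_trans (ler_wpM2l ei_ge0 (cf_ok _ (fun j => x_ge0 j istar))) _.
by rewrite mulrCA -[X in _ <= X]mulrA; apply: ler_wpM2l.
Qed.

Lemma prob_hit_ge_expR :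
  1 - expR (- (N%:R * \sum_j hit_prob j)) <= prob_hit N f e x istar.
Proof.
have -> : N%:R * \sum_j hit_prob j = \sum_(p : 'I_s * 'I_N) hit_prob p.1.
  rewrite -(pair_bigA _ (fun j (_ : 'I_N) => hit_prob j)) /= mulr_sumr.
  by apply: eq_bigr => j _; rewrite sumr_const card_ord mulr_natl.
rewrite prob_hit_eq lerD2l lerN2; apply: prod_1subr_le_expR => p _.
by rewrite hit_prob_ge0 hit_prob_le1.
Qed.

Lemma sum_hit_prob_ge (cfs B : R) :
  superadditive f -> cf_ineq f s cfs -> 0 < f (\sum_j x j istar) ->
  \sum_i (e i)^-1 * f (\sum_j x j i) <= B * ((e istar)^-1 * f (\sum_j x j istar)) ->
  1 <= cfs / s%:R * B * \sum_j hit_prob j.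
Proof.
move=> f_sup cf_ok fs_gt0 load_le.
pose P := (e istar)^-1 * f (\sum_j x j istar); set K := cfs / s%:R; set St := \sum_j hit_prob j.
have K_gt0 : 0 < K := cf_ineq_gt0 cf_ok (fun j => x_ge0 j istar) fs_gt0.
have P_gt0 : 0 < P by rewrite mulr_gt0 ?invr_gt0.
have St_ge0 : 0 <= St by apply: sumr_ge0 => j _; apply: hit_prob_ge0.
have P_le : P <= K * St * (B * P).
  apply: le_trans (load_le_hits_mass cf_ok (ltW K_gt0)) _.
  apply: ler_wpM2l; first by rewrite mulr_ge0 // ltW.
  exact: le_trans (sum_server_mass_le f_sup) load_le.
rewrite -(ler_pM2r P_gt0) mul1r (_ : _ * P = K * St * (B * P)) //; ring.
Qed.

End Sampling.

Theorem lemma4p1 (R : realType) (n s N : nat) (f : R -> R) (cfs : R)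
  (x : 'I_s -> 'I_n -> R) (e : 'I_n -> R) (istar : 'I_n) (C : R) :
  (2 <= n)%N -> (1 <= s)%N ->
  (forall y, 0 <= y -> 0 <= f y) ->
  superadditive f ->
  is_cf f s cfs ->
  (forall j i, 0 <= x j i) ->
  (forall i, 0 < e i) ->
  let xs := fun i : 'I_n => \sum_(j < s) x j i in
  (forall i, (e i)^-1 * f (xs i) <= (e istar)^-1 * f (xs istar)) ->
  0 < C ->
  \sum_(i < n) (e i)^-1 * f (xs i)
     <= (C * ln (n%:R) ^+ 2) * ((e istar)^-1 * f (xs istar)) ->
  0 < f (xs istar) ->
  32 * C * ln (n%:R) ^+ 3 * cfs / s%:R <= N%:R ->
  1 - (n%:R ^+ 4)^-1 <= prob_hit N f e x istar.
Proof.
move=> n_ge2 _ f_ge0 f_sup [cf_ok _] x_ge0 e_gt0 xs _ _ load_le fs_gt0 N_ge.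
have n_gt0 : (0 < n)%N by apply: leq_trans n_ge2.
pose L := ln (n%:R : R); pose St := \sum_j hit_prob f e x istar j.
have L_gt0 : 0 < L by rewrite ln_gt0 // ltr1n.
have St_ge0 : 0 <= St by apply: sumr_ge0 => j _; apply: hit_prob_ge0.
have St_ge : 1 <= cfs / s%:R * (C * L ^+ 2) * St.
  by have := sum_hit_prob_ge f_ge0 x_ge0 e_gt0 f_sup cf_ok fs_gt0 load_le.
have hits_ge : 4 * L <= N%:R * St.
  have le_scaled : 32 * L <= 32 * L * (cfs / s%:R * (C * L ^+ 2) * St).
    by rewrite ler_peMr // mulr_ge0 // ltW.
  have scaled_le : 32 * C * L ^+ 3 * cfs / s%:R * St <= N%:R * St.
    exact: ler_wpM2r.
  have scaled_eq : 32 * L * (cfs / s%:R * (C * L ^+ 2) * St) = 32 * C * L ^+ 3 * cfs / s%:R * St.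
    by ring.
  lra.
apply: le_trans _ (prob_hit_ge_expR N istar f_ge0 x_ge0 e_gt0 n_gt0); rewrite lerD2l lerN2.
by rewrite -(lnK (_ : n%:R \in Num.pos)) ?posrE ?ltr0n // -expRM_natl -expRN ler_expR lerN2.
Qed.
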